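(* Let $w$ be a non-degenerate 3-web on an open subset of $\mathbb{R}^3$ formed by two foliations by surfaces and one foliation by curves. Then the rank of $w$ is at most $1$.
   Context: For a web $w$ formed by foliations $\mathcal{F}_1,\dots,\mathcal{F}_d$ (leaves may have different dimensions), an abelian relation is a $d$-tuple of 1-forms $(\sigma_1,\dots,\sigma_d)$ such that each $\sigma_i$ vanishes on the leaves of $\mathcal{F}_i$, each $\sigma_i$ is closed, and $\sigma_1+\dots+\sigma_d=0$; the rank of $w$ is the dimension of the real vector space of abelian relations. Non-degenerate means: the two surface foliations are transversal (their tangent planes are distinct at each point), and the tangent line of the curve foliation is, at each point, not contained in the tangent plane of either surface foliation. The statement is local. *)

From HB Require Import structures.
From mathcomp Require Import all_boot all_order all_algebra.
From mathcomp Require Import all_classical all_reals all_analysis.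
Set Implicit Arguments. Unset Strict Implicit. Unset Printing Implicit Defensive.
Import Order.TTheory GRing.Theory Num.Theory.
Import numFieldNormedType.Exports.
Local Open Scope classical_set_scope.
Local Open Scope ring_scope.

Notation pt R := ('rV[R]_3).

Fixpoint Ck_on (R : realType) (m k : nat) (U : set (pt R))
    (f : pt R -> 'rV[R]_m) : Prop :=
  match k with
  | 0 => forall x, U x -> {for x, continuous f}
  | k'.+1 => (forall x, U x -> differentiable f x) /\
             forall v : pt R, Ck_on k' U (fun x => derive f x v)
  end.

Definition smooth_on (R : realType) (m : nat) (U : set (pt R))
    (f : pt R -> 'rV[R]_m) : Prop := forall k, Ck_on k U f.

(* A (smooth, regular) foliation of codimension m on the open set U, described
   by its tangent distribution D (D x = tangent space at x of the leaf through x):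
   locally it is given by the fibres of a smooth submersion g : V -> R^m,
   i.e. D x = ker (dg_x) with dg_x surjective.
   Codimension 1 = foliation by surfaces, codimension 2 = foliation by curves. *)
Definition foliation (R : realType) (m : nat) (U : set (pt R))
    (D : pt R -> set (pt R)) : Prop :=
  forall p, U p -> exists (V : set (pt R)) (g : pt R -> 'rV[R]_m),
    [/\ open V, V p, V `<=` U, smooth_on V g &
      forall x, V x ->
        (forall w : 'rV[R]_m, exists v : pt R, derive g x v = w) /\
        D x = [set v | derive g x v = 0]].

(* 1-forms on R^3: a covector field given by its coefficient row vector. *)
Definition form (R : realType) := pt R -> pt R.

Definition eval_form (R : realType) (a v : pt R) : R :=
  \sum_(i < 3) a 0 i * v 0 i.

Definition dcoef (R : realType) (s : form R) (i : 'I_3) (x : pt R) : 'rV[R]_3 :=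
  derive (fun y => s y) x (delta_mx 0 i).

Definition closed_form_on (R : realType) (W : set (pt R)) (s : form R) : Prop :=
  smooth_on W s /\
  forall x, W x -> forall i j : 'I_3, dcoef s i x 0 j = dcoef s j x 0 i.

Definition vanishes_on_leaves (R : realType) (W : set (pt R))
    (D : pt R -> set (pt R)) (s : form R) : Prop :=
  forall x, W x -> forall v, D x v -> eval_form (s x) v = 0.

Definition abelian_relation (R : realType) (D1 D2 D3 : pt R -> set (pt R))
    (W : set (pt R)) (s1 s2 s3 : form R) : Prop :=
  [/\ closed_form_on W s1, closed_form_on W s2, closed_form_on W s3,
      [/\ vanishes_on_leaves W D1 s1, vanishes_on_leaves W D2 s2
        & vanishes_on_leaves W D3 s3] &
      forall x, W x -> s1 x + s2 x + s3 x = 0].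

Definition web_nondegenerate (R : realType) (U : set (pt R))
    (D1 D2 D3 : pt R -> set (pt R)) : Prop :=
  forall x, U x -> [/\ D1 x <> D2 x, ~ (D3 x `<=` D1 x) & ~ (D3 x `<=` D2 x)].

(* The rank (at the point p, i.e. the dimension of the space of germs at p of
   abelian relations) is at most 1: any two germs are linearly dependent. *)
Definition rank_le1_at (R : realType) (D1 D2 D3 : pt R -> set (pt R)) (p : pt R) : Prop :=
  forall (W W' : set (pt R)) (s1 s2 s3 t1 t2 t3 : form R),
    open W -> W p -> abelian_relation D1 D2 D3 W s1 s2 s3 ->
    open W' -> W' p -> abelian_relation D1 D2 D3 W' t1 t2 t3 ->
    exists (a b : R) (W'' : set (pt R)),
      [/\ (a, b) <> (0, 0), open W'', W'' p, W'' `<=` W `&` W' &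
        forall x, W'' x ->
          [/\ a *: s1 x + b *: t1 x = 0, a *: s2 x + b *: t2 x = 0
            & a *: s3 x + b *: t3 x = 0]].

(* Near p the foliations are cut out by covector fields: u and w for the
   surfaces, r1 and r2 for the curves, whose tangent line is spanned by
   r1 x r2.  The annihilator of a plane is a line, so some nontrivial
   combination S of two abelian relations has S1 p = 0; it suffices to show
   that S then vanishes near p.  As S1 kills ker u, |u|^2 S1 = F u with
   F = S1.u; likewise |w|^2 S2 = G w, and S3 (r1 x r2) = 0 becomes
   A F + B G = 0 with A, B nonzero at p by nondegeneracy.  Closedness of S1
   and S2 gives dF /\ u = O(F) and dG /\ w = O(F); differentiating
   A F + B G = 0 turns the latter into dF /\ w = O(F), and since u, w are
   independent, dF = O(F).  Gronwall's inequality along segments from p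
   forces F = 0 near p, and with it G, S1, S2 and S3. *)

From HB Require Import structures.
From mathcomp Require Import all_boot all_order all_algebra.
From mathcomp Require Import all_classical all_reals all_analysis.
From mathcomp Require Import ring lra.
Set Implicit Arguments. Unset Strict Implicit. Unset Printing Implicit Defensive.
Import Order.TTheory GRing.Theory Num.Theory.
Import numFieldNormedType.Exports.
Local Open Scope classical_set_scope.
Local Open Scope ring_scope.

Section CrossProduct.
Variable R : comRingType.
Implicit Types a b u v w : 'I_3 -> R.

Definition dot3 a b := a 0 * b 0 + a 1 * b 1 + a 2 * b 2.

Definition cross3 a b : 'I_3 -> R := fun k =>
  match val k with
  | 0%N => a 1 * b 2 - a 2 * b 1
  | 1%N => a 2 * b 0 - a 0 * b 2
  | _ => a 0 * b 1 - a 1 * b 0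
  end.

Lemma ord3P (j : 'I_3) : [\/ j = 0, j = 1 | j = 2].
Proof.
case: j => [[|[|[|//]]] Hj]; [constructor 1|constructor 2|constructor 3];
  exact: val_inj.
Qed.

Lemma sum_ord3 (F : 'I_3 -> R) : \sum_(k < 3) F k = F 0 + F 1 + F 2.
Proof.
rewrite !big_ord_recr big_ord0 /= add0r.
by congr (F _ + F _ + F _); apply: val_inj.
Qed.

Lemma dot3_cross3l a b : dot3 a (cross3 a b) = 0.
Proof. by rewrite /dot3 /cross3 /=; ring. Qed.

Lemma dot3_cross3r a b : dot3 b (cross3 a b) = 0.
Proof. by rewrite /dot3 /cross3 /=; ring. Qed.

Lemma cross3_normC a b : dot3 (cross3 b a) (cross3 b a) = dot3 (cross3 a b) (cross3 a b).
Proof. by rewrite /dot3 /cross3 /=; ring. Qed.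

Lemma lagrange3 a b : dot3 a a * dot3 b b = dot3 (cross3 a b) (cross3 a b) + dot3 a b ^+ 2.
Proof. by rewrite /dot3 /cross3 /=; ring. Qed.

Lemma binet_cauchy3 a b u v :
  dot3 a u * dot3 b v - dot3 a v * dot3 b u = dot3 (cross3 a b) (cross3 u v).
Proof. by rewrite /dot3 /cross3 /=; ring. Qed.

(* Expansion of v in the frame (u, w, u x w), cleared of denominators. *)
Lemma cross3_frame_expansion u w v k :
  dot3 (cross3 u w) (cross3 u w) * v k =
  dot3 (cross3 v w) (cross3 u w) * u k - dot3 (cross3 v u) (cross3 u w) * w k
  + dot3 (cross3 v u) w * cross3 u w k.
Proof. by case: (ord3P k) => ->; rewrite /dot3 /cross3 /=; ring. Qed.

Lemma dot3_common_kernel r1 r2 a v :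
  dot3 r1 v = 0 -> dot3 r2 v = 0 ->
  dot3 (cross3 r1 r2) (cross3 r1 r2) * dot3 a v =
  dot3 v (cross3 r1 r2) * dot3 a (cross3 r1 r2).
Proof.
move=> r1v r2v; apply/eqP; rewrite -subr_eq0; apply/eqP.
transitivity (dot3 r2 v * dot3 a (cross3 (cross3 r1 r2) r1)
              - dot3 r1 v * dot3 a (cross3 (cross3 r1 r2) r2)).
  by rewrite /dot3 /cross3 /=; ring.
by rewrite r1v r2v !mul0r subr0.
Qed.

End CrossProduct.

Section RealCrossProduct.
Variable R : realFieldType.
Implicit Types a b s v : 'I_3 -> R.

Lemma dot3_ge0 a : 0 <= dot3 a a.
Proof. by rewrite /dot3 -!expr2 !addr_ge0 // sqr_ge0. Qed.

Lemma dot3_eq0 a : dot3 a a = 0 -> forall k, a k = 0.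
Proof.
move=> a0 k; have [h0 h1 h2] : [/\ a 0 = 0, a 1 = 0 & a 2 = 0].
  by move: a0; rewrite /dot3 => ?; split; nra.
by case: (ord3P k) => ->.
Qed.

Lemma dot3_neq0 a v : dot3 a v != 0 -> dot3 a a != 0.
Proof.
apply: contra => /eqP /dot3_eq0 a0.
by rewrite /dot3 !a0 !mul0r !addr0.
Qed.

Lemma kernel_sub_parallel a s :
  (forall v, dot3 a v = 0 -> dot3 s v = 0) ->
  forall j, dot3 a a * s j = dot3 s a * a j.
Proof.
move=> sub.
pose v k := dot3 a a * s k - dot3 s a * a k.
have av : dot3 a v = 0 by rewrite /v /dot3; ring.
have vv : dot3 v v = 0.
  transitivity (dot3 a a * dot3 s v - dot3 s a * dot3 a v).
    by rewrite /v /dot3; ring.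
  by rewrite (sub _ av) av !mulr0 subr0.
by move=> j; apply/eqP; rewrite -subr_eq0; apply/eqP; exact: (dot3_eq0 vv).
Qed.

Lemma kernel_sub_of_cross3_eq0 a b v0 :
  dot3 a v0 = 1 -> dot3 (cross3 a b) (cross3 a b) = 0 ->
  forall v, dot3 a v = 0 -> dot3 b v = 0.
Proof.
move=> av0 ab0 v av.
have aa : dot3 a a != 0 by apply: (@dot3_neq0 _ v0); rewrite av0 oner_neq0.
have e : dot3 b v * dot3 a a - dot3 a v * dot3 a b =
         dot3 (cross3 (cross3 a b) a) v by rewrite /dot3 /cross3 /=; ring.
have c0 := dot3_eq0 ab0; set c := cross3 a b in e c0.
move: e; rewrite av mul0r subr0 /dot3 /cross3 /= !c0 => /eqP.
by rewrite !(mul0r, subrr, addr0) mulf_eq0 (negbTE aa) orbF => /eqP.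
Qed.

Lemma dot3_cross3_neq0 a r1 r2 :
  dot3 (cross3 r1 r2) (cross3 r1 r2) != 0 ->
  ~ (forall v, dot3 r1 v = 0 -> dot3 r2 v = 0 -> dot3 a v = 0) ->
  dot3 a (cross3 r1 r2) != 0.
Proof.
move=> P0 notsub; apply/negP => /eqP aP; apply: notsub => v r1v r2v.
have := dot3_common_kernel a r1v r2v; rewrite aP mulr0 => /eqP.
by rewrite mulf_eq0 (negbTE P0) => /eqP.
Qed.

Lemma cross3_neq0 a b v0 v1 : dot3 a v0 = 1 -> dot3 b v1 = 1 ->
  ~ (forall v, dot3 a v = 0 <-> dot3 b v = 0) ->
  dot3 (cross3 a b) (cross3 a b) != 0.
Proof.
move=> av0 bv1 neq; apply/negP => /eqP ab0; apply: neq => v; split.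
  exact: kernel_sub_of_cross3_eq0 av0 ab0 v.
by apply: kernel_sub_of_cross3_eq0 bv1 _ v; rewrite cross3_normC.
Qed.

Lemma exists_nontrivial_comb (x y : R) :
  exists a b : R, (a, b) <> (0, 0) /\ a * x + b * y = 0.
Proof.
have [x0|x0] := eqVneq x 0.
  by exists 1, 0; split; [case=> /eqP; rewrite oner_eq0 | rewrite x0 mulr0 mul0r addr0].
exists y, (- x); split; last by ring.
by case=> _ /eqP; rewrite oppr_eq0 (negbTE x0).
Qed.

End RealCrossProduct.

Section Calculus.
Variable R : realType.
Notation pt := 'rV[R]_3.

Definition coordf m (f : pt -> 'rV[R]_m) (j : 'I_m) : pt -> R := fun x => f x 0 j.

Definition partial (h : pt -> R) (i : 'I_3) (x : pt) : R := derive h x (delta_mx 0 i).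

Lemma coordf_differentiable m (f : pt -> 'rV[R]_m) j x :
  differentiable f x -> differentiable (coordf f j) x.
Proof.
move=> df; have -> : coordf f j = (fun N : 'rV[R]_m => N 0 j) \o f by [].
by apply: differentiable_comp => //; exact: differentiable_coord.
Qed.

Lemma derive_coordf m (f : pt -> 'rV[R]_m) j x v :
  differentiable f x -> derive (coordf f j) x v = derive f x v 0 j.
Proof.
move=> df; rewrite deriveE; last exact: coordf_differentiable.
rewrite deriveE //.
have -> : coordf f j = (fun N : 'rV[R]_m => N 0 j) \o f by [].
rewrite diff_comp //; last exact: differentiable_coord.
have @c : {linear 'rV[R]_m -> R}.
  by exists (fun N : 'rV[R]_m => N 0 j); do 2![eexists]; do ?[constructor];
     rewrite ?mxE// => ? *; rewrite ?mxE//; move=> ?; rewrite !mxE.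
rewrite (_ : (fun N : 'rV[R]_m => N 0 j) = c) // diff_lin //.
exact: coord_continuous.
Qed.

Lemma derive_sum_partial (h : pt -> R) x v : differentiable h x ->
  derive h x v = \sum_(k < 3) v 0 k * partial h k x.
Proof.
move=> dh; rewrite {1}(row_sum_delta v) deriveE // linear_sum.
by apply: eq_bigr => k _; rewrite linearZ /= /partial deriveE.
Qed.

Lemma smooth_on_differentiable m (V : set pt) (f : pt -> 'rV[R]_m) x :
  smooth_on V f -> V x -> differentiable f x.
Proof. by move=> /(_ 1%N) [+ _] Vx => /(_ x Vx). Qed.

Lemma smooth_on_derive m (V : set pt) (f : pt -> 'rV[R]_m) v :
  smooth_on V f -> smooth_on V (fun x => derive f x v).
Proof. by move=> sf k; case: (sf k.+1) => _ /(_ v). Qed.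

Lemma partialD (h g : pt -> R) i x : differentiable h x -> differentiable g x ->
  partial (fun y => h y + g y) i x = partial h i x + partial g i x.
Proof. by move=> dh dg; rewrite /partial (@deriveD _ _ _ h g) //; apply: diff_derivable. Qed.

Lemma partialM (h g : pt -> R) i x : differentiable h x -> differentiable g x ->
  partial (fun y => h y * g y) i x = h x * partial g i x + g x * partial h i x.
Proof. by move=> dh dg; rewrite /partial (@deriveM _ _ h g) //; apply: diff_derivable. Qed.

Lemma partial_cst c i x : partial (fun _ => c) i x = 0.
Proof. exact: derive_cst. Qed.

Lemma near_eq_partial (f g : pt -> R) i x : (\forall y \near x, f y = g y) ->
  partial f i x = partial g i x.
Proof. by move=> fg; apply: near_eq_derive. Qed.

Lemma derive_along_segment (F : pt -> R) (p d : pt) (t : R) :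
  differentiable F (p + t *: d) ->
  derivable (fun s : R => F (p + s *: d)) t 1 /\
  'D_1 (fun s : R => F (p + s *: d)) t = derive F (p + t *: d) d.
Proof.
move=> dF.
have ge : (fun s : R => p + s *: d) = cst p + ( *:%R ^~ d) by apply: funext.
have gd : is_diff t (cst p + ( *:%R ^~ d)) (0 + ( *:%R ^~ d)) by exact: is_diffD.
have dg : differentiable (fun s : R => p + s *: d) t by rewrite ge; exact: ex_diff.
have dg1 : 'd (fun s : R => p + s *: d) t 1 = d.
  by rewrite ge diff_val /= add0r scale1r.
have dc : differentiable (F \o (fun s : R => p + s *: d)) t.
  exact: differentiable_comp.
split; first exact/derivable1_diffP.
by rewrite deriveE // diff_comp //= dg1 deriveE.
Qed.

(* [phi^2 exp(-2 L t)] is nonincreasing on [0, 1]. *)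
Lemma gronwall01 (phi : R -> R) L :
  (forall t, 0 <= t <= 1 -> derivable phi t 1) ->
  (forall t, 0 < t < 1 -> `|'D_1 phi t| <= L * `|phi t|) ->
  phi 0 = 0 -> phi 1 = 0.
Proof.
move=> dphi bnd phi0.
pose g : R -> R := phi * phi * (expR \o ( *%R (- (2 * L)))).
have gd (t : R) : 0 <= t <= 1 -> is_derive t 1 g
    ((phi t * phi t) * (expR (- (2 * L) * t) * (- (2 * L))) +
     expR (- (2 * L) * t) * (phi t * 'D_1 phi t + phi t * 'D_1 phi t)).
  move=> /dphi /derivableP dp; apply: is_derive_eq.
  by rewrite /= /GRing.scale /= mulr1.
have g_noninc : g 1 <= g 0.
  apply: (@ler0_derive1_nincr _ g 0 1) => //.
  - move=> x; rewrite in_itv /= => /andP[x0 x1].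
    by have [] := gd x (ltac:(by rewrite !ltW) : 0 <= x <= 1).
  - move=> x; rewrite in_itv /= => /andP[x0 x1].
    have [_ dg] := gd x (ltac:(by rewrite !ltW) : 0 <= x <= 1).
    rewrite derive1E dg.
    have ex := expR_gt0 (- (2 * L) * x).
    have bx := bnd x (ltac:(by rewrite x0 x1) : 0 < x < 1).
    have h1 : phi x * 'D_1 phi x <= `|phi x| * `|'D_1 phi x|.
      by rewrite -normrM ler_norm.
    have h2 : `|phi x| * `|'D_1 phi x| <= `|phi x| * (L * `|phi x|).
      by rewrite ler_wpM2l.
    have h3 : `|phi x| * `|phi x| = phi x * phi x.
      by rewrite -normrM ger0_norm // -expr2 sqr_ge0.
    have hd : phi x * 'D_1 phi x - L * (phi x * phi x) <= 0.
      by rewrite subr_le0 -h3 (le_trans h1) // (le_trans h2) // mulrCA.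
    set e := expR _ in ex *.
    have -> : phi x * phi x * (e * - (2 * L)) +
      e * (phi x * 'D_1 phi x + phi x * 'D_1 phi x) =
      (2 * e) * (phi x * 'D_1 phi x - L * (phi x * phi x)) by ring.
    by rewrite mulr_ge0_le0 // mulr_ge0 // ltW.
  - apply: continuous_in_subspaceT => x; rewrite inE /= in_itv /= => x01.
    by have [/derivable1_diffP/differentiable_continuous] := gd x x01.
have g1 : phi 1 * phi 1 * expR (- (2 * L) * 1) <=
  phi 0 * phi 0 * expR (- (2 * L) * 0) by exact: g_noninc.
rewrite phi0 !mul0r in g1.
have ex := expR_gt0 (- (2 * L) * 1).
have : phi 1 * phi 1 <= 0 by rewrite -(@ler_pM2r _ (expR (- (2 * L) * 1))) // mul0r.
by nra.
Qed.

End Calculus.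

Section LocalEstimates.
Variables (R : realType) (p : 'rV[R]_3).
Notation pt := 'rV[R]_3.
Implicit Types (F G X Y b h g : pt -> R).

Definition bounded_near h := exists M, \forall x \near p, `|h x| <= M.

Definition regular_near h :=
  (\forall x \near p, differentiable h x) /\ (forall i, bounded_near (partial h i)).

Definition dominated F X := exists K, \forall x \near p, `|X x| <= K * `|F x|.

Lemma continuous_bounded_near h : {for p, continuous h} -> bounded_near h.
Proof.
move=> hc; exists (`|h p| + 1).
have := @cvgr_dist_lt _ _ _ _ (nbhs_filter p) _ _ hc _ ltr01.
apply: filterS => x hx.
have -> : h x = h p + (- (h p - h x)) by rewrite opprB addrC subrK.
by rewrite (le_trans (ler_normD _ _))// lerD2l normrN ltW.
Qed.

Lemma bounded_near_eq h g : (\forall x \near p, h x = g x) ->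
  bounded_near g -> bounded_near h.
Proof.
move=> hg [M gM]; exists M; near=> x.
by rewrite (near hg x) //; near: x.
Unshelve. all: by end_near.
Qed.

Lemma bounded_nearD h g : bounded_near h -> bounded_near g ->
  bounded_near (fun x => h x + g x).
Proof.
move=> [M1 H1] [M2 H2]; exists (M1 + M2); near=> x.
rewrite (le_trans (ler_normD _ _)) // lerD //; near: x; [exact: H1|exact: H2].
Unshelve. all: by end_near.
Qed.

Lemma bounded_nearM h g : bounded_near h -> bounded_near g ->
  bounded_near (fun x => h x * g x).
Proof.
move=> [M1 H1] [M2 H2]; exists (`|M1| * `|M2|); near=> x.
rewrite normrM ler_pM //; apply: le_trans (ler_norm _); near: x;
  [exact: H1|exact: H2].
Unshelve. all: by end_near.
Qed.

Lemma bounded_near_cst c : bounded_near (fun _ => c).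
Proof. by exists `|c|; near=> x. Unshelve. all: by end_near. Qed.

Lemma bounded_nearN h : bounded_near h -> bounded_near (fun x => - h x).
Proof. by move=> [M H]; exists M; apply: filterS H => x; rewrite normrN. Qed.

Lemma bounded_nearB h g : bounded_near h -> bounded_near g ->
  bounded_near (fun x => h x - g x).
Proof. by move=> Bh Bg; apply: bounded_nearD => //; exact: bounded_nearN. Qed.

Lemma regular_near_continuous h : regular_near h -> {for p, continuous h}.
Proof. by case=> /nbhs_singleton /differentiable_continuous. Qed.

Lemma regular_near_bounded h : regular_near h -> bounded_near h.
Proof. by move=> /regular_near_continuous /continuous_bounded_near. Qed.

Lemma regular_near_partial h i : regular_near h -> bounded_near (partial h i).
Proof. by case=> _ /(_ i). Qed.

Lemma regular_nearD h g : regular_near h -> regular_near g ->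
  regular_near (fun x => h x + g x).
Proof.
move=> [dh bh] [dg bg]; split.
  by near=> x; apply: differentiableD; near: x.
move=> i; apply: (@bounded_near_eq _ (fun x => partial h i x + partial g i x)).
  by near=> x; apply: partialD; near: x.
exact: bounded_nearD.
Unshelve. all: by end_near.
Qed.

Lemma regular_nearM h g : regular_near h -> regular_near g ->
  regular_near (fun x => h x * g x).
Proof.
move=> Gh Gg; have Bh := regular_near_bounded Gh; have Bg := regular_near_bounded Gg.
case: Gh => dh bh; case: Gg => dg bg; split.
  by near=> x; apply: differentiableM; near: x.
move=> i; apply: (@bounded_near_eq _ (fun x => h x * partial g i x + g x * partial h i x)).
  by near=> x; apply: partialM; near: x.
by apply: bounded_nearD; apply: bounded_nearM.
Unshelve. all: by end_near.
Qed.

Lemma regular_near_cst c : regular_near (fun _ => c).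
Proof.
split; first by near=> x; exact: differentiable_cst.
move=> i; apply: (@bounded_near_eq _ (fun _ => 0)); last exact: bounded_near_cst.
by near=> x; apply: partial_cst.
Unshelve. all: by end_near.
Qed.

Lemma regular_nearB h g : regular_near h -> regular_near g ->
  regular_near (fun x => h x - g x).
Proof.
move=> Gh Gg; have -> : (fun x => h x - g x) = (fun x => h x + (fun _ => -1) x * g x).
  by apply: funext => x; rewrite mulN1r.
by apply: regular_nearD => //; apply: regular_nearM => //; exact: regular_near_cst.
Qed.

Lemma regular_near_dot3 (a b : 'I_3 -> pt -> R) :
  (forall k, regular_near (a k)) -> (forall k, regular_near (b k)) ->
  regular_near (fun x => dot3 (a^~ x) (b^~ x)).
Proof. by move=> Ga Gb; rewrite /dot3; repeat apply: regular_nearD; apply: regular_nearM. Qed.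

Lemma regular_near_cross3 (a b : 'I_3 -> pt -> R) :
  (forall k, regular_near (a k)) -> (forall k, regular_near (b k)) ->
  forall k, regular_near (fun x => cross3 (a^~ x) (b^~ x) k).
Proof.
by move=> Ga Gb k; case: (ord3P k) => ->; rewrite /cross3 /=;
  apply: regular_nearB; apply: regular_nearM.
Qed.

Lemma smooth_on_regular_near m (V : set pt) (f : pt -> 'rV[R]_m) j :
  open V -> V p -> smooth_on V f -> regular_near (coordf f j).
Proof.
move=> oV Vp sf; have NV : \forall x \near p, V x by exact: open_nbhs_nbhs.
split; first by near=> x; apply: coordf_differentiable; apply: (smooth_on_differentiable sf); near: x.
move=> i; apply: (@bounded_near_eq _ (coordf (fun x => derive f x (delta_mx 0 i)) j)).
  near=> x; rewrite /partial derive_coordf //.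
  by apply: (smooth_on_differentiable sf); near: x.
apply/continuous_bounded_near/differentiable_continuous/coordf_differentiable.
exact: (smooth_on_differentiable (smooth_on_derive _ sf)).
Unshelve. all: by end_near.
Qed.

Lemma near_norm_ge_half h : {for p, continuous h} -> h p != 0 ->
  \forall x \near p, `|h p| / 2 <= `|h x|.
Proof.
move=> hc hp.
have e0 : 0 < `|h p| / 2 by rewrite divr_gt0 ?normr_gt0.
have := @cvgr_dist_lt _ _ _ _ (nbhs_filter p) _ _ hc _ e0.
apply: filterS => x hx.
have tri : `|h p| <= `|h p - h x| + `|h x| by rewrite -{1}[h p](subrK (h x)) ler_normD.
by rewrite -(lerD2l (`|h p| / 2)) -splitr (le_trans tri) // lerD2r ltW.
Qed.

Lemma near_neq0 h : {for p, continuous h} -> h p != 0 -> \forall x \near p, h x != 0.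
Proof.
move=> hc hp; apply: filterS (near_norm_ge_half hc hp) => x hx.
by rewrite -normr_gt0 (lt_le_trans _ hx) // divr_gt0 ?normr_gt0.
Qed.

Lemma dominated_refl F : dominated F F.
Proof. by exists 1; near=> x; rewrite mul1r. Unshelve. all: by end_near. Qed.

Lemma dominated_eq F X Y : (\forall x \near p, X x = Y x) -> dominated F Y -> dominated F X.
Proof.
move=> XY [K H]; exists K; near=> x.
by rewrite (near XY x) //; near: x.
Unshelve. all: by end_near.
Qed.

Lemma dominatedD F X Y : dominated F X -> dominated F Y -> dominated F (fun x => X x + Y x).
Proof.
move=> [K1 H1] [K2 H2]; exists (K1 + K2); near=> x.
rewrite mulrDl (le_trans (ler_normD _ _)) // lerD //; near: x; [exact: H1|exact: H2].
Unshelve. all: by end_near.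
Qed.

Lemma dominatedMl F b X : bounded_near b -> dominated F X -> dominated F (fun x => b x * X x).
Proof.
move=> [M Hb] [K H]; exists (`|M| * `|K|); near=> x.
have h1 : `|b x| <= M by near: x.
have h2 : `|X x| <= K * `|F x| by near: x.
rewrite normrM -mulrA ler_pM //; first by rewrite (le_trans h1) // ler_norm.
by rewrite (le_trans h2) // ler_wpM2r // ler_norm.
Unshelve. all: by end_near.
Qed.

Lemma dominatedN F X : dominated F X -> dominated F (fun x => - X x).
Proof. by move=> [K H]; exists K; apply: filterS H => x; rewrite normrN. Qed.

Lemma dominatedB F X Y : dominated F X -> dominated F Y -> dominated F (fun x => X x - Y x).
Proof. by move=> DX DY; apply: dominatedD => //; exact: dominatedN. Qed.

Lemma dominated_trans F G X : dominated F G -> dominated G X -> dominated F X.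
Proof.
move=> [K1 H1] [K2 H2]; exists (`|K2| * `|K1|); near=> x.
have h1 : `|G x| <= K1 * `|F x| by near: x.
have h2 : `|X x| <= K2 * `|G x| by near: x.
rewrite (le_trans h2) // (le_trans (ler_wpM2r _ (ler_norm K2))) // -mulrA ler_wpM2l //.
by rewrite (le_trans h1) // ler_wpM2r // ler_norm.
Unshelve. all: by end_near.
Qed.

Lemma dominated_mulr F G b : dominated F G -> bounded_near b ->
  dominated F (fun x => G x * b x).
Proof.
move=> FG Bb; apply: (dominated_trans FG).
apply: (@dominated_eq _ _ (fun x => b x * G x)); first by near=> x; rewrite mulrC.
exact: dominatedMl (dominated_refl G).
Unshelve. all: by end_near.
Qed.

Lemma dominated_cancel F b X : {for p, continuous b} -> b p != 0 ->
  dominated F (fun x => b x * X x) -> dominated F X.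
Proof.
move=> bc bp [K H]; exists (K / (`|b p| / 2)).
have bp2 : 0 < `|b p| / 2 by rewrite divr_gt0 ?normr_gt0.
have Hb := near_norm_ge_half bc bp.
near=> x.
have h1 : `|b p| / 2 <= `|b x| by near: x.
have h2 : `|b x * X x| <= K * `|F x| by near: x.
rewrite mulrAC ler_pdivlMr // (le_trans _ h2) // normrM mulrC.
by rewrite ler_wpM2r.
Unshelve. all: by end_near.
Qed.

Lemma dominated_dot3 F (a b : 'I_3 -> pt -> R) :
  (forall k, dominated F (a k)) -> (forall k, bounded_near (b k)) ->
  dominated F (fun x => dot3 (a^~ x) (b^~ x)).
Proof. by move=> Da Bb; rewrite /dot3; repeat apply: dominatedD; apply: dominated_mulr. Qed.

Lemma dominated_uniform3 F (X : 'I_3 -> pt -> R) : (forall k, dominated F (X k)) ->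
  exists K, \forall x \near p, forall k, `|X k x| <= K * `|F x|.
Proof.
move=> DX; have [K0 H0] := DX 0; have [K1 H1] := DX 1; have [K2 H2] := DX 2.
exists (`|K0| + `|K1| + `|K2|); near=> x => k.
have nF := normr_ge0 (F x).
have [h0 h1 h2] : [/\ `|X 0 x| <= K0 * `|F x|, `|X 1 x| <= K1 * `|F x|
  & `|X 2 x| <= K2 * `|F x|] by split; near: x.
have := ler_norm K0; have := ler_norm K1; have := ler_norm K2.
have := normr_ge0 K0; have := normr_ge0 K1; have := normr_ge0 K2.
by case: (ord3P k) => -> *; [apply: le_trans h0 _|apply: le_trans h1 _|apply: le_trans h2 _];
  rewrite ler_wpM2r //; lra.
Unshelve. all: by end_near.
Qed.

Lemma near_eq0_of_dominated_partial F : F p = 0 ->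
  (\forall x \near p, differentiable F x) -> (forall k, dominated F (partial F k)) ->
  \forall x \near p, F x = 0.
Proof.
move=> Fp dF /dominated_uniform3 [K HK].
have /nbhs_ballP [r r0 Hr] : \forall x \near p,
    differentiable F x /\ forall k, `|partial F k x| <= K * `|F x|.
  by near=> x; split; near: x.
apply/nbhs_ballP; exists r => // y pyr; set d := y - p.
have seg tau : 0 <= tau <= 1 -> ball p r (p + tau *: d).
  move=> /andP[t0 t1]; move: pyr; rewrite -ball_normE /= => pyr.
  rewrite opprD addrA subrr add0r normrN normrZ ger0_norm //.
  by apply: le_lt_trans pyr; rewrite /d -normrN opprB ler_piMl.
pose phi tau := F (p + tau *: d).
suff : phi 1 = 0 by rewrite /phi scale1r /d addrC subrK.
apply: (@gronwall01 _ phi (K * \sum_(k < 3) `|d 0 k|)); last by rewrite /phi scale0r addr0.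
  by move=> tau htau; exact: (derive_along_segment (Hr _ (seg tau htau)).1).1.
move=> tau /andP[t0 t1]; have [dFt bF] := Hr _ (seg tau (ltac:(by rewrite !ltW))).
rewrite (derive_along_segment dFt).2 derive_sum_partial //.
rewrite (le_trans (ler_norm_sum _ _ _)) // mulrAC mulrC mulr_suml.
by apply: ler_sum => k _; rewrite normrM ler_wpM2l.
Unshelve. all: by end_near.
Qed.

End LocalEstimates.

Section ParallelClosedForm.
Variables (R : realType) (p : 'rV[R]_3).
Notation pt := 'rV[R]_3.
Variables (n H : pt -> R) (a s : 'I_3 -> pt -> R).
Hypotheses (reg_n : regular_near p n) (n_p : n p != 0)
  (reg_a : forall j, regular_near p (a j))
  (dH : \forall x \near p, differentiable H x)
  (ds : \forall x \near p, forall j, differentiable (s j) x)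
  (s_closed : \forall x \near p, forall i j, partial (s j) i x = partial (s i) j x)
  (s_parallel : \forall x \near p, forall j, n x * s j x = H x * a j x).

(* With [s = (H / n) a], closedness of [s] gives [dH /\ a = d n /\ s - H da]. *)
Lemma curl_parallel : \forall x \near p, forall i j,
  partial H i x * a j x - partial H j x * a i x =
  partial n i x * s j x - partial n j x * s i x
  - H x * (partial (a j) i x - partial (a i) j x).
Proof.
have da : \forall x \near p, forall k, differentiable (a k) x.
  exact: (filter_forall _ (fun k => (reg_a k).1)).
have dn : \forall x \near p, differentiable n x by case: reg_n.
have par_near := nbhs_interior s_parallel.
near=> x.
have [dnx dHx dsx dax] : [/\ differentiable n x, differentiable H x,
  forall k, differentiable (s k) x & forall k, differentiable (a k) x].
  by split; near: x.
have par_x : \forall y \near x, forall k, n y * s k y = H y * a k y by near: x.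
have Dpar i k : n x * partial (s k) i x + s k x * partial n i x =
                H x * partial (a k) i x + a k x * partial H i x.
  rewrite -partialM // -partialM //; apply: near_eq_partial.
  by apply: filterS par_x => y /(_ k).
have s_closed_x : forall i j, partial (s j) i x = partial (s i) j x by near: x.
move=> i j; have eij := Dpar i j; have eji := Dpar j i.
have sij := s_closed_x i j.
have e1 : a j x * partial H i x = n x * partial (s j) i x + s j x * partial n i x
  - H x * partial (a j) i x by rewrite eij; ring.
have e2 : a i x * partial H j x = n x * partial (s i) j x + s i x * partial n j x
  - H x * partial (a i) j x by rewrite eji; ring.
by rewrite (mulrC (partial H i x)) (mulrC (partial H j x)) e1 e2 sij; ring.
Unshelve. all: by end_near.
Qed.

Variable F : pt -> R.
Hypothesis H_dom : dominated p F H.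

Lemma dominated_parallel j : dominated p F (s j).
Proof.
apply: (dominated_cancel (regular_near_continuous reg_n) n_p).
apply: (@dominated_eq _ _ _ _ (fun x => a j x * H x)).
  by apply: filterS s_parallel => x /(_ j) ->; rewrite mulrC.
exact: dominatedMl (regular_near_bounded (reg_a j)) H_dom.
Qed.

Lemma dominated_curl_parallel i j :
  dominated p F (fun x => partial H i x * a j x - partial H j x * a i x).
Proof.
apply: (@dominated_eq _ _ _ _ (fun x => partial n i x * s j x - partial n j x * s i x
  - H x * (partial (a j) i x - partial (a i) j x))).
  by apply: filterS curl_parallel => x /(_ i j).
apply: dominatedB; first apply: dominatedB.
- exact: dominatedMl (regular_near_partial i reg_n) (dominated_parallel j).
- exact: dominatedMl (regular_near_partial j reg_n) (dominated_parallel i).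
apply: dominated_mulr H_dom _.
exact: bounded_nearB (regular_near_partial i (reg_a j)) (regular_near_partial j (reg_a i)).
Qed.

End ParallelClosedForm.

Section RelationVanishes.
Variables (R : realType) (p : 'rV[R]_3).
Notation pt := 'rV[R]_3.
Variables (u w r1 r2 s t : 'I_3 -> pt -> R).
Hypotheses (reg_u : forall j, regular_near p (u j)) (reg_w : forall j, regular_near p (w j))
  (reg_r1 : forall j, regular_near p (r1 j)) (reg_r2 : forall j, regular_near p (r2 j)).
Hypotheses (ds : \forall x \near p, forall j, differentiable (s j) x)
  (dt : \forall x \near p, forall j, differentiable (t j) x)
  (s_closed : \forall x \near p, forall i j, partial (s j) i x = partial (s i) j x)
  (t_closed : \forall x \near p, forall i j, partial (t j) i x = partial (t i) j x).
Hypotheses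
  (s_ker : \forall x \near p, forall v, dot3 (u^~ x) v = 0 -> dot3 (s^~ x) v = 0)
  (t_ker : \forall x \near p, forall v, dot3 (w^~ x) v = 0 -> dot3 (t^~ x) v = 0)
  (st_line : \forall x \near p,
     dot3 (s^~ x) (cross3 (r1^~ x) (r2^~ x)) + dot3 (t^~ x) (cross3 (r1^~ x) (r2^~ x)) = 0).
Hypotheses (u_line : dot3 (u^~ p) (cross3 (r1^~ p) (r2^~ p)) != 0)
  (w_line : dot3 (w^~ p) (cross3 (r1^~ p) (r2^~ p)) != 0)
  (uw_indep : dot3 (cross3 (u^~ p) (w^~ p)) (cross3 (u^~ p) (w^~ p)) != 0)
  (s_p : dot3 (s^~ p) (u^~ p) = 0).

Let F x := dot3 (s^~ x) (u^~ x).
Let G x := dot3 (t^~ x) (w^~ x).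
Let nu x := dot3 (u^~ x) (u^~ x).
Let nw x := dot3 (w^~ x) (w^~ x).
Let L k x := cross3 (r1^~ x) (r2^~ x) k.
Let A x := nw x * dot3 (u^~ x) (L^~ x).
Let B x := nu x * dot3 (w^~ x) (L^~ x).
Let N k x := cross3 (u^~ x) (w^~ x) k.

Let reg_N k : regular_near p (N k). Proof. exact: regular_near_cross3. Qed.
Let reg_nu : regular_near p nu. Proof. exact: regular_near_dot3. Qed.
Let reg_nw : regular_near p nw. Proof. exact: regular_near_dot3. Qed.
Let reg_A : regular_near p A.
Proof. exact: regular_nearM reg_nw (regular_near_dot3 reg_u (regular_near_cross3 reg_r1 reg_r2)). Qed.
Let reg_B : regular_near p B.
Proof. exact: regular_nearM reg_nu (regular_near_dot3 reg_w (regular_near_cross3 reg_r1 reg_r2)). Qed.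

Let nu_p : nu p != 0.
Proof.
apply: contra uw_indep => /eqP nu0; have := lagrange3 (u^~ p) (w^~ p).
rewrite -/(nu p) nu0 mul0r => /eqP; rewrite eq_sym paddr_eq0 ?dot3_ge0 ?sqr_ge0 //.
by case/andP.
Qed.

Let nw_p : nw p != 0.
Proof.
apply: contra uw_indep => /eqP nw0; have := lagrange3 (u^~ p) (w^~ p).
rewrite -/(nw p) nw0 mulr0 => /eqP; rewrite eq_sym paddr_eq0 ?dot3_ge0 ?sqr_ge0 //.
by case/andP.
Qed.

Let A_p : A p != 0. Proof. exact: mulf_neq0. Qed.
Let B_p : B p != 0. Proof. exact: mulf_neq0. Qed.

Let s_parallel : \forall x \near p, forall j, nu x * s j x = F x * u j x.
Proof. by apply: filterS s_ker => x; apply: kernel_sub_parallel. Qed.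

Let t_parallel : \forall x \near p, forall j, nw x * t j x = G x * w j x.
Proof. by apply: filterS t_ker => x; apply: kernel_sub_parallel. Qed.

(* [s + t] vanishes on the common tangent line spanned by [L]. *)
Let AF_BG : \forall x \near p, A x * F x + B x * G x = 0.
Proof.
near=> x.
have [sx tx lx] : [/\ forall j, nu x * s j x = F x * u j x,
  forall j, nw x * t j x = G x * w j x &
  dot3 (s^~ x) (L^~ x) + dot3 (t^~ x) (L^~ x) = 0] by split; near: x.
transitivity (nw x * dot3 (fun k => nu x * s k x) (L^~ x)
              + nu x * dot3 (fun k => nw x * t k x) (L^~ x)).
  by rewrite /dot3 !sx !tx /A /B /F /G /dot3; ring.
transitivity (nu x * nw x * (dot3 (s^~ x) (L^~ x) + dot3 (t^~ x) (L^~ x))).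
  by rewrite /dot3; ring.
by rewrite lx mulr0.
Unshelve. all: by end_near.
Qed.

Let du : \forall x \near p, forall k, differentiable (u k) x.
Proof. exact: (filter_forall _ (fun k => (reg_u k).1)). Qed.

Let dw : \forall x \near p, forall k, differentiable (w k) x.
Proof. exact: (filter_forall _ (fun k => (reg_w k).1)). Qed.

Let dF : \forall x \near p, differentiable F x.
Proof.
near=> x; have [dsx dux] : (forall k, differentiable (s k) x) /\
  (forall k, differentiable (u k) x) by split; near: x.
by rewrite /F /dot3; repeat apply: differentiableD; apply: differentiableM.
Unshelve. all: by end_near.
Qed.

Let dG : \forall x \near p, differentiable G x.
Proof.
near=> x; have [dtx dwx] : (forall k, differentiable (t k) x) /\
  (forall k, differentiable (w k) x) by split; near: x.
by rewrite /G /dot3; repeat apply: differentiableD; apply: differentiableM.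
Unshelve. all: by end_near.
Qed.

Let G_dom : dominated p F G.
Proof.
apply: (dominated_cancel (regular_near_continuous reg_B) B_p).
apply: (@dominated_eq _ _ _ _ (fun x => (fun y => - A y) x * F x)).
  by apply: filterS AF_BG => x e; apply/eqP; rewrite mulNr -addr_eq0 addrC e.
exact: dominatedMl (bounded_nearN (regular_near_bounded reg_A)) (dominated_refl _ F).
Qed.

Let curl_Fu i j :
  dominated p F (fun x => partial F i x * u j x - partial F j x * u i x).
Proof. exact (dominated_curl_parallel reg_nu nu_p reg_u dF ds s_closed s_parallel (dominated_refl _ F) i j). Qed.

Let curl_Gw i j :
  dominated p F (fun x => partial G i x * w j x - partial G j x * w i x).
Proof. exact (dominated_curl_parallel reg_nw nw_p reg_w dG dt t_closed t_parallel G_dom i j). Qed.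

(* Differentiating [A F + B G = 0] trades [dG /\ w] for [dF /\ w]. *)
Let curl_Fw i j :
  dominated p F (fun x => partial F i x * w j x - partial F j x * w i x).
Proof.
have dAF_BG : \forall x \near p, forall k,
    A x * partial F k x + F x * partial A k x + (B x * partial G k x + G x * partial B k x) = 0.
  have dA := reg_A.1; have dB := reg_B.1; have AF_BG' := nbhs_interior AF_BG.
  near=> x => k.
  have [dAx dBx dFx dGx] : [/\ differentiable A x, differentiable B x,
    differentiable F x & differentiable G x] by split; near: x.
  rewrite -partialM // -partialM // -partialD; try exact: differentiableM.
  rewrite -(partial_cst 0 k x); apply: near_eq_partial; near: x.
  exact: AF_BG'.
apply: (dominated_cancel (regular_near_continuous reg_A) A_p).
apply: (@dominated_eq _ _ _ _ (fun x =>
   - (F x * (partial A i x * w j x - partial A j x * w i x))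
   - (G x * (partial B i x * w j x - partial B j x * w i x))
   - B x * (partial G i x * w j x - partial G j x * w i x))).
  apply: filterS dAF_BG => x dx.
  have ei : A x * partial F i x = - (F x * partial A i x
      + (B x * partial G i x + G x * partial B i x)).
    by apply/eqP; rewrite -addr_eq0 addrA dx.
  have ej : A x * partial F j x = - (F x * partial A j x
      + (B x * partial G j x + G x * partial B j x)).
    by apply/eqP; rewrite -addr_eq0 addrA dx.
  transitivity (w j x * (A x * partial F i x) - w i x * (A x * partial F j x)); first by ring.
  by rewrite ei ej; ring.
have Bw k := regular_near_bounded (reg_w k).
have bounded_curl (h : pt -> R) : regular_near p h ->
    bounded_near p (fun x => partial h i x * w j x - partial h j x * w i x).
  by move=> rh; apply: bounded_nearB; apply: bounded_nearM => //; exact: regular_near_partial.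
apply: dominatedB; first apply: dominatedB.
- exact: dominatedN (dominated_mulr (dominated_refl _ F) (bounded_curl _ reg_A)).
- exact: dominated_mulr G_dom (bounded_curl _ reg_B).
- exact: dominatedMl (regular_near_bounded reg_B) (curl_Gw i j).
Unshelve. all: by end_near.
Qed.

Let grad_F k : dominated p F (partial F k).
Proof.
pose gF x l := partial F l x.
have cross_dom (a : 'I_3 -> pt -> R) :
    (forall i j, dominated p F (fun x => partial F i x * a j x - partial F j x * a i x)) ->
    forall l, dominated p F (fun x => cross3 (gF x) (a^~ x) l).
  by move=> ca l; case: (ord3P l) => ->; exact: ca.
have Bu l := regular_near_bounded (reg_u l).
have Bw l := regular_near_bounded (reg_w l).
have BN l := regular_near_bounded (reg_N l).
apply: (dominated_cancel (regular_near_continuous (regular_near_dot3 reg_N reg_N)) uw_indep).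
apply: (@dominated_eq _ _ _ _ (fun x =>
   u k x * dot3 (fun l => cross3 (gF x) (w^~ x) l) (N^~ x)
   - w k x * dot3 (fun l => cross3 (gF x) (u^~ x) l) (N^~ x)
   + N k x * dot3 (fun l => cross3 (gF x) (u^~ x) l) (w^~ x))).
  near=> x; rewrite (cross3_frame_expansion (u^~ x) (w^~ x) (gF x) k) /N; ring.
apply: dominatedD; first apply: dominatedB.
- exact: dominatedMl (Bu k) (dominated_dot3 (cross_dom _ curl_Fw) BN).
- exact: dominatedMl (Bw k) (dominated_dot3 (cross_dom _ curl_Fu) BN).
- exact: dominatedMl (BN k) (dominated_dot3 (cross_dom _ curl_Fu) Bw).
Unshelve. all: by end_near.
Qed.

Lemma relation_vanishes_near : \forall x \near p, forall j, s j x = 0 /\ t j x = 0.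
Proof.
have F0 := near_eq0_of_dominated_partial s_p dF grad_F.
have nu0 := near_neq0 (regular_near_continuous reg_nu) nu_p.
have nw0 := near_neq0 (regular_near_continuous reg_nw) nw_p.
have B0 := near_neq0 (regular_near_continuous reg_B) B_p.
near=> x => j.
have [Fx nux nwx Bx] : [/\ F x = 0, nu x != 0, nw x != 0 & B x != 0] by split; near: x.
have Gx : G x = 0.
  have : A x * F x + B x * G x = 0 by near: x.
  by rewrite Fx mulr0 add0r => /eqP; rewrite mulf_eq0 (negbTE Bx) => /eqP.
have [sj tj] : nu x * s j x = F x * u j x /\ nw x * t j x = G x * w j x.
  by split; move: j; near: x.
split; [move: sj; rewrite Fx | move: tj; rewrite Gx];
  by rewrite mul0r => /eqP; rewrite mulf_eq0 ?(negbTE nux) ?(negbTE nwx) => /eqP.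
Unshelve. all: by end_near.
Qed.

End RelationVanishes.

Section Foliations.
Variable R : realType.
Notation pt := 'rV[R]_3.

Definition jacobian_row m (g : pt -> 'rV[R]_m) (j : 'I_m) : 'I_3 -> pt -> R :=
  fun k => coordf (fun y => derive g y (delta_mx 0 k)) j.

Lemma derive_jacobian_row m (g : pt -> 'rV[R]_m) j x (v : pt) : differentiable g x ->
  derive g x v 0 j = dot3 (jacobian_row g j ^~ x) (fun k => v 0 k).
Proof.
move=> dg; have dgj : differentiable (coordf g j) x by exact: coordf_differentiable.
rewrite -derive_coordf // derive_sum_partial // sum_ord3 /partial !derive_coordf //.
by rewrite /dot3 /jacobian_row /coordf !(mulrC (v 0 _)).
Qed.

Lemma row3K (v : 'I_3 -> R) : (fun k => (\row_k v k : pt) 0 k) = v.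
Proof. by apply: funext => k; rewrite mxE. Qed.

Lemma foliation1_covector (U : set pt) D p : foliation 1 U D -> U p ->
  exists u : 'I_3 -> pt -> R, [/\ forall k, regular_near p (u k),
    \forall x \near p, forall v : pt, D x v <-> dot3 (u^~ x) (fun k => v 0 k) = 0
  & exists v0, dot3 (u^~ p) v0 = 1].
Proof.
move=> FD Up; have [V [g [oV Vp _ sg hg]]] := FD p Up.
exists (jacobian_row g 0); split.
- by move=> k; apply: smooth_on_regular_near oV Vp (smooth_on_derive _ sg).
- have NV : \forall x \near p, V x by exact: open_nbhs_nbhs.
  near=> x => v; have Vx : V x by near: x.
  have [_ ->] := hg x Vx; rewrite /= -derive_jacobian_row; last exact: smooth_on_differentiable sg Vx.
  split => [->|h]; first by rewrite mxE.
  by apply/rowP => i; rewrite ord1 h mxE.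
- have [v hv] := (hg p Vp).1 (const_mx 1).
  exists (fun k => v 0 k); rewrite -derive_jacobian_row; last exact: smooth_on_differentiable sg Vp.
  by rewrite hv mxE.
Unshelve. all: by end_near.
Qed.

Lemma row2_eq0 (M : 'rV[R]_2) : M = 0 <-> M 0 0 = 0 /\ M 0 1 = 0.
Proof.
split=> [->|[h0 h1]]; first by rewrite !mxE.
apply/rowP => i; rewrite mxE; case: i => [[|[|//]] Hi].
- by rewrite -h0; congr (M _ _); apply: val_inj.
- by rewrite -h1; congr (M _ _); apply: val_inj.
Qed.

Lemma foliation2_covectors (U : set pt) D p : foliation 2 U D -> U p ->
  exists r1 r2 : 'I_3 -> pt -> R,
    [/\ forall k, regular_near p (r1 k), forall k, regular_near p (r2 k),
      \forall x \near p, forall v : pt, D x v <->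
        dot3 (r1^~ x) (fun k => v 0 k) = 0 /\ dot3 (r2^~ x) (fun k => v 0 k) = 0
    & dot3 (cross3 (r1^~ p) (r2^~ p)) (cross3 (r1^~ p) (r2^~ p)) != 0].
Proof.
move=> FD Up; have [V [g [oV Vp _ sg hg]]] := FD p Up.
exists (jacobian_row g 0), (jacobian_row g 1); split.
- by move=> k; apply: smooth_on_regular_near oV Vp (smooth_on_derive _ sg).
- by move=> k; apply: smooth_on_regular_near oV Vp (smooth_on_derive _ sg).
- have NV : \forall x \near p, V x by exact: open_nbhs_nbhs.
  near=> x => v; have Vx : V x by near: x.
  have dgx := smooth_on_differentiable sg Vx.
  by have [_ ->] := hg x Vx; rewrite /= row2_eq0 !derive_jacobian_row.
have dgp := smooth_on_differentiable sg Vp.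
have [va hva] := (hg p Vp).1 (delta_mx 0 0).
have [vb hvb] := (hg p Vp).1 (delta_mx 0 1).
have entry (M N : 'rV[R]_2) k : M = N -> M 0 k = N 0 k by move->.
have := entry _ _ 0 hva; have := entry _ _ 1 hva.
have := entry _ _ 0 hvb; have := entry _ _ 1 hvb.
rewrite !derive_jacobian_row // => b1 b0 a1 a0.
rewrite [RHS]mxE in a0; rewrite [RHS]mxE in a1.
rewrite [RHS]mxE in b0; rewrite [RHS]mxE in b1.
have := binet_cauchy3 (jacobian_row g 0 ^~ p) (jacobian_row g 1 ^~ p)
  (fun k => va 0 k) (fun k => vb 0 k).
rewrite a0 a1 b0 b1 mulr1 mul0r subr0 => e.
apply/negP => /eqP /dot3_eq0 L0; move: e; rewrite /dot3 !L0 !mul0r !addr0.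
by move/eqP; rewrite oner_eq0.
Unshelve. all: by end_near.
Qed.

End Foliations.

Section LocalRelations.
Variable R : realType.
Notation pt := 'rV[R]_3.
Implicit Types (s t : form R) (a b c : R).

Lemma eval_formD (x y v : pt) : eval_form (x + y) v = eval_form x v + eval_form y v.
Proof. by rewrite /eval_form -big_split; apply: eq_bigr => i _; rewrite mxE mulrDl. Qed.

Lemma eval_formZ c (x v : pt) : eval_form (c *: x) v = c * eval_form x v.
Proof. by rewrite /eval_form mulr_sumr; apply: eq_bigr => i _; rewrite mxE mulrA. Qed.

Lemma eval_formN (x v : pt) : eval_form (- x) v = - eval_form x v.
Proof. by rewrite -scaleN1r eval_formZ mulN1r. Qed.

Lemma eval_form_row (x : pt) (v : 'I_3 -> R) :
  eval_form x (\row_k v k) = dot3 (fun k => x 0 k) v.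
Proof. by rewrite /eval_form sum_ord3 /dot3 !mxE. Qed.

Lemma comb_apply a b s t x : (a *: s + b *: t) x = a *: s x + b *: t x.
Proof. by []. Qed.

Definition closed_near (p : pt) s :=
  (\forall x \near p, differentiable s x) /\
  \forall x \near p, forall i j, dcoef s i x 0 j = dcoef s j x 0 i.

(* The germ at [p] of an abelian relation. *)
Definition relation_near (D1 D2 D3 : pt -> set pt) (p : pt) (s1 s2 s3 : form R) :=
  [/\ closed_near p s1, closed_near p s2,
      \forall x \near p, [/\ forall v, D1 x v -> eval_form (s1 x) v = 0,
        forall v, D2 x v -> eval_form (s2 x) v = 0
      & forall v, D3 x v -> eval_form (s3 x) v = 0]
    & \forall x \near p, s1 x + s2 x + s3 x = 0].

Lemma closed_form_on_near (W : set pt) p s : open W -> W p ->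
  closed_form_on W s -> closed_near p s.
Proof.
move=> oW Wp [ss cs]; have NW : \forall x \near p, W x by exact: open_nbhs_nbhs.
by split; apply: filterS NW => x Wx; [exact: smooth_on_differentiable ss Wx | exact: cs].
Qed.

Lemma abelian_relation_near D1 D2 D3 (W : set pt) p s1 s2 s3 : open W -> W p ->
  abelian_relation D1 D2 D3 W s1 s2 s3 -> relation_near D1 D2 D3 p s1 s2 s3.
Proof.
move=> oW Wp [cs1 cs2 _ [vs1 vs2 vs3] ss].
have NW : \forall x \near p, W x by exact: open_nbhs_nbhs.
split; [exact: closed_form_on_near cs1 | exact: closed_form_on_near cs2 | |].
  by apply: filterS NW => x Wx; split; [exact: vs1 | exact: vs2 | exact: vs3].
exact: filterS ss NW.
Qed.

Lemma dcoef_comb a b s t i x : differentiable s x -> differentiable t x ->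
  dcoef (a *: s + b *: t) i x = a *: dcoef s i x + b *: dcoef t i x.
Proof.
move=> ds dt; rewrite /dcoef deriveD; try by apply/diff_derivable/differentiableZ.
by rewrite !deriveZ //; exact: diff_derivable.
Qed.

Lemma closed_near_comb p a b s t : closed_near p s -> closed_near p t ->
  closed_near p (a *: s + b *: t).
Proof.
move=> [ds cs] [dt ct]; split.
  by near=> x; apply: differentiableD; apply: differentiableZ; near: x.
near=> x => i j; have [dsx dtx] : differentiable s x /\ differentiable t x by split; near: x.
rewrite !dcoef_comb // !mxE; congr (_ * _ + _ * _); move: i j; near: x; by [].
Unshelve. all: by end_near.
Qed.

Lemma relation_near_comb D1 D2 D3 p a b s1 s2 s3 t1 t2 t3 :
  relation_near D1 D2 D3 p s1 s2 s3 -> relation_near D1 D2 D3 p t1 t2 t3 ->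
  relation_near D1 D2 D3 p (a *: s1 + b *: t1) (a *: s2 + b *: t2) (a *: s3 + b *: t3).
Proof.
move=> [cs1 cs2 vs ss] [ct1 ct2 vt st]; split; try exact: closed_near_comb.
  near=> x; have [[vs1 vs2 vs3] [vt1 vt2 vt3]] : [/\ forall v, D1 x v -> eval_form (s1 x) v = 0,
      forall v, D2 x v -> eval_form (s2 x) v = 0 & forall v, D3 x v -> eval_form (s3 x) v = 0] /\
    [/\ forall v, D1 x v -> eval_form (t1 x) v = 0,
      forall v, D2 x v -> eval_form (t2 x) v = 0 & forall v, D3 x v -> eval_form (t3 x) v = 0].
    by split; near: x.
  by split=> v Dv /=; rewrite eval_formD !eval_formZ ?vs1 ?vt1 ?vs2 ?vt2 ?vs3 ?vt3 // !mulr0 addr0.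
near=> x; have [sx tx] : s1 x + s2 x + s3 x = 0 /\ t1 x + t2 x + t3 x = 0 by split; near: x.
rewrite !comb_apply; apply/rowP => k; move: sx tx => /(congr1 (fun M : pt => M 0 k)) sk.
move=> /(congr1 (fun M : pt => M 0 k)); rewrite /= !mxE in sk * => tk.
transitivity (a * (s1 x 0 k + s2 x 0 k + s3 x 0 k) + b * (t1 x 0 k + t2 x 0 k + t3 x 0 k)).
  by ring.
by rewrite sk tk !mulr0 addr0.
Unshelve. all: by end_near.
Qed.

End LocalRelations.

Section WebRank.
Variable R : realType.
Notation pt := 'rV[R]_3.
Variables (U : set pt) (D1 D2 D3 : pt -> set pt).
Hypotheses (F1 : foliation 1 U D1) (F2 : foliation 1 U D2) (F3 : foliation 2 U D3)
  (nondeg : web_nondegenerate U D1 D2 D3).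

Lemma annihilator_dependent p (y z : pt) : U p ->
  (forall v, D1 p v -> eval_form y v = 0) -> (forall v, D1 p v -> eval_form z v = 0) ->
  exists a b : R, (a, b) <> (0, 0) /\ a *: y + b *: z = 0.
Proof.
move=> Up Dy Dz; have [u [_ /nbhs_singleton D_ker [v0 uv0]]] := foliation1_covector F1 Up.
have [a [b [ab0 abu]]] := exists_nontrivial_comb
  (dot3 (fun k => y 0 k) (u^~ p)) (dot3 (fun k => z 0 k) (u^~ p)).
exists a, b; split => //; set c := a *: y + b *: z.
have c_ker v : dot3 (u^~ p) v = 0 -> dot3 (fun k => c 0 k) v = 0.
  move=> uv; have Dv : D1 p (\row_k v k) by apply/D_ker; rewrite row3K.
  by rewrite -eval_form_row eval_formD !eval_formZ Dy ?Dz // !mulr0 addr0.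
have cu : dot3 (fun k => c 0 k) (u^~ p) = 0 by rewrite -abu /dot3 !mxE; ring.
have uu : dot3 (u^~ p) (u^~ p) != 0 by apply: (@dot3_neq0 _ _ v0); rewrite uv0 oner_neq0.
apply/rowP => k; have := kernel_sub_parallel c_ker k.
by rewrite cu mul0r => /eqP; rewrite mulf_eq0 (negbTE uu) => /eqP ->; rewrite mxE.
Qed.

Lemma relation_near_vanishes p (S1 S2 S3 : form R) : U p ->
  relation_near D1 D2 D3 p S1 S2 S3 -> S1 p = 0 ->
  \forall x \near p, [/\ S1 x = 0, S2 x = 0 & S3 x = 0].
Proof.
move=> Up [[dS1 cS1] [dS2 cS2] vanish sum] S1p.
have [u [reg_u D1_ker [v0 uv0]]] := foliation1_covector F1 Up.
have [w [reg_w D2_ker [v1 wv1]]] := foliation1_covector F2 Up.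
have [r1 [r2 [reg_r1 reg_r2 D3_ker L_p]]] := foliation2_covectors F3 Up.
have [D12 D31 D32] := nondeg Up.
have u_line : dot3 (u^~ p) (cross3 (r1^~ p) (r2^~ p)) != 0.
  apply: dot3_cross3_neq0 L_p _ => sub; apply: D31 => v /(nbhs_singleton D3_ker) [h1 h2].
  exact/(nbhs_singleton D1_ker)/sub.
have w_line : dot3 (w^~ p) (cross3 (r1^~ p) (r2^~ p)) != 0.
  apply: dot3_cross3_neq0 L_p _ => sub; apply: D32 => v /(nbhs_singleton D3_ker) [h1 h2].
  exact/(nbhs_singleton D2_ker)/sub.
have uw_indep : dot3 (cross3 (u^~ p) (w^~ p)) (cross3 (u^~ p) (w^~ p)) != 0.
  apply: cross3_neq0 uv0 wv1 _ => ker_eq; apply: D12; apply/seteqP; split=> v.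
    by move=> /(nbhs_singleton D1_ker) /ker_eq /(nbhs_singleton D2_ker).
  by move=> /(nbhs_singleton D2_ker) /ker_eq /(nbhs_singleton D1_ker).
have comp_differentiable (S : form R) : (\forall x \near p, differentiable S x) ->
    \forall x \near p, forall j, differentiable (coordf S j) x.
  by move=> dS; apply: filterS dS => x dx j; exact: coordf_differentiable.
have comp_closed (S : form R) : closed_near p S ->
    \forall x \near p, forall i j, partial (coordf S j) i x = partial (coordf S i) j x.
  move=> [dS cS]; near=> x => i j; have dSx : differentiable S x by near: x.
  by rewrite /partial !derive_coordf //; move: i j; near: x.
have comp_ker (S : form R) (D : pt -> set pt) (c : 'I_3 -> pt -> R) :
    (\forall x \near p, forall v : pt, D x v <-> dot3 (c^~ x) (fun k => v 0 k) = 0) ->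
    (\forall x \near p, forall v, D x v -> eval_form (S x) v = 0) ->
    \forall x \near p, forall v, dot3 (c^~ x) v = 0 -> dot3 ((coordf S)^~ x) v = 0.
  move=> D_ker SD; near=> x => v cv; rewrite -eval_form_row.
  by apply: (near SD x) => //; apply/(near D_ker x) => //; rewrite row3K.
have st_line : \forall x \near p, dot3 ((coordf S1)^~ x) (cross3 (r1^~ x) (r2^~ x))
    + dot3 ((coordf S2)^~ x) (cross3 (r1^~ x) (r2^~ x)) = 0.
  near=> x; have [D3x [_ _ vS3] sx] : [/\ forall v : pt, D3 x v <->
      dot3 (r1^~ x) (fun k => v 0 k) = 0 /\ dot3 (r2^~ x) (fun k => v 0 k) = 0,
    [/\ forall v, D1 x v -> eval_form (S1 x) v = 0, forall v, D2 x v -> eval_form (S2 x) v = 0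
      & forall v, D3 x v -> eval_form (S3 x) v = 0]
    & S1 x + S2 x + S3 x = 0] by split; near: x.
  have DL : D3 x (\row_k cross3 (r1^~ x) (r2^~ x) k).
    by apply/D3x; rewrite row3K dot3_cross3l dot3_cross3r.
  have S3x : S3 x = - (S1 x + S2 x) by rewrite -[RHS]addr0 -sx addKr.
  move: (vS3 _ DL); rewrite S3x eval_formN eval_formD !eval_form_row.
  by move/eqP; rewrite oppr_eq0 => /eqP.
have S1u_p : dot3 ((coordf S1)^~ p) (u^~ p) = 0.
  by rewrite /dot3 /coordf S1p !mxE !mul0r !addr0.
have := relation_vanishes_near reg_u reg_w reg_r1 reg_r2
  (comp_differentiable _ dS1) (comp_differentiable _ dS2)
  (comp_closed _ (conj dS1 cS1)) (comp_closed _ (conj dS2 cS2))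
  (comp_ker _ _ _ D1_ker (filterS (fun x '(And3 h _ _) => h) vanish))
  (comp_ker _ _ _ D2_ker (filterS (fun x '(And3 _ h _) => h) vanish))
  st_line u_line w_line uw_indep S1u_p.
move=> S12_0; near=> x.
have S12x : forall j, coordf S1 j x = 0 /\ coordf S2 j x = 0 by near: x; exact: S12_0.
have sx : S1 x + S2 x + S3 x = 0 by near: x.
have S1x : S1 x = 0 by apply/rowP => j; rewrite mxE; exact: (S12x j).1.
have S2x : S2 x = 0 by apply/rowP => j; rewrite mxE; exact: (S12x j).2.
by split => //; move: sx; rewrite S1x S2x !add0r.
Unshelve. all: by end_near.
Qed.

End WebRank.

Theorem lemma1 (R : realType) (U : set 'rV[R]_3) (D1 D2 D3 : 'rV[R]_3 -> set 'rV[R]_3) :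
  open U ->
  foliation 1 U D1 -> foliation 1 U D2 -> foliation 2 U D3 ->
  web_nondegenerate U D1 D2 D3 ->
  forall p, U p -> rank_le1_at D1 D2 D3 p.
Proof.
move=> _ F1 F2 F3 nondeg p Up W W' s1 s2 s3 t1 t2 t3 oW Wp rs oW' W'p rt.
have s1_leaf : forall v, D1 p v -> eval_form (s1 p) v = 0.
  by case: rs => _ _ _ [+ _ _] _; apply.
have t1_leaf : forall v, D1 p v -> eval_form (t1 p) v = 0.
  by case: rt => _ _ _ [+ _ _] _; apply.
have [a [b [ab0 ab_p]]] := annihilator_dependent F1 Up s1_leaf t1_leaf.
have rel := relation_near_comb a b (abelian_relation_near oW Wp rs)
  (abelian_relation_near oW' W'p rt).
have /nbhs_ballP [r r0 Hr] : \forall x \near p, [/\ W x, W' x &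
    [/\ (a *: s1 + b *: t1) x = 0, (a *: s2 + b *: t2) x = 0 & (a *: s3 + b *: t3) x = 0]].
  have NW : \forall x \near p, W x by exact: open_nbhs_nbhs.
  have NW' : \forall x \near p, W' x by exact: open_nbhs_nbhs.
  have := relation_near_vanishes F1 F2 F3 nondeg Up rel ab_p.
  by move=> S0; near=> x; split; near: x.
exists a, b, (ball p r); split => //; first exact: ball_open.
- exact: ballxx.
- by move=> x /Hr [].
- by move=> x /Hr [_ _].
Unshelve. all: by end_near.
Qed.
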